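(* Let $(X,\alpha)$ and $(Y,\beta)$ be Cantor minimal systems and let $\phi:X\to\operatorname{Isom}(\mathbb{T})$, $\psi:Y\to\operatorname{Isom}(\mathbb{T})$ be continuous maps. Let $\mathcal{P}=\{X(v,k):v\in V,1\le k\le h(v)\}$ and $\mathcal{Q}=\{Y(w,l):w\in W,1\le l\le h(w)\}$ be Kakutani–Rohlin partitions for $(X,\alpha)$ and $(Y,\beta)$ respectively, such that $o(\phi)$ is constant on each member of $\mathcal{P}$ and $o(\psi)$ is constant on each member of $\mathcal{Q}$. Suppose $\pi:\mathcal{Q}\to\mathcal{P}$ is a bijection such that (1) $\pi(Y(w,l+1))=\alpha(\pi(Y(w,l)))$ for all $w\in W$ and $1\le l\le h(w)-1$; (2) for every $v\in V$, $o(\phi)_v=\sum o(\psi)_w$, the sum running over all $w\in W$ such that $\pi(Y(w,1))$ belongs to the tower $v$ (i.e. equals $X(v,k)$ for some $k$). Then there exist a homeomorphism $\sigma:X\to Y$ and a continuous map $\omega:X\to\operatorname{Isom}(\mathbb{T})$ such that $\sigma(\pi(U))=U$ for all $U\in\mathcal{Q}$ and \[ \max_{x\in X}\max_{t\in\mathbb{T}}\big|\psi_{\sigma(x)}\omega_x(t)-\omega_{\alpha(x)}\phi_x(t)\big|<\max_{v\in V}h(v)^{-1}. \]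
   Context: A Cantor minimal system $(X,\alpha)$ is a Cantor set $X$ with a homeomorphism $\alpha$ having no nontrivial closed invariant subsets. $\mathbb{T}=\mathbb{R}/\mathbb{Z}$, and for $s,t\in\mathbb{T}$, $|s-t|$ is the distance from $s-t$ to $0$ in $\mathbb{T}$. $\operatorname{Isom}(\mathbb{T})=\{R_t\}\cup\{R_t\lambda\}$ where $R_t(s)=s+t$, $\lambda(s)=-s$, with the uniform topology. $o(\phi):X\to\mathbb{Z}_2$ is $0$ at $x$ if $\phi_x$ preserves orientation and $1$ otherwise. A Kakutani–Rohlin partition for $(X,\alpha)$ is a partition of $X$ into nonempty clopen sets $X(v,k)$, indexed by a finite set $V$ and $1\le k\le h(v)$, with $\alpha(X(v,k))=X(v,k+1)$ for $1\le k<h(v)$; the sets $X(v,1),\dots,X(v,h(v))$ form the tower $v$ of height $h(v)$. When $o(\phi)$ is constant on each member of $\mathcal{P}$, $o(\phi)_v\in\mathbb{Z}_2$ denotes $\sum_{i=0}^{h(v)-1}o(\phi)(\alpha^i(x))$ for any $x\in X(v,1)$ (independent of $x$); $o(\psi)_w$ is defined analogously. *)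

From HB Require Import structures.
From mathcomp Require Import all_boot all_order all_algebra.
From mathcomp Require Import all_classical all_reals all_analysis.
Set Implicit Arguments. Unset Strict Implicit. Unset Printing Implicit Defensive.
Import Order.TTheory GRing.Theory Num.Theory.
Import numFieldNormedType.Exports.
Local Open Scope classical_set_scope.
Local Open Scope ring_scope.

Definition distT (R : realType) (s t : R) : R :=
  inf [set `|s - t - n%:~R| | n in [set: int]].

(* IsomT t false is R_t (s |-> s + t); IsomT t true is R_t lambda (s |-> t - s). *)
Record isomT (R : realType) := IsomT { rot : R ; refl : bool }.

Definition isom_app (R : realType) (g : isomT R) (s : R) : R :=
  if refl g then rot g - s else rot g + s.

Definition isom_dist (R : realType) (g g' : isomT R) : R :=
  sup [set distT (isom_app g s) (isom_app g' s) | s in [set: R]].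

Definition isom_continuous (R : realType) (X : topologicalType)
    (phi : X -> isomT R) : Prop :=
  forall x (e : R), 0 < e -> \forall y \near x, isom_dist (phi y) (phi x) < e.

(* o(phi)(x) : false = 0 (orientation preserving), true = 1 *)
Definition orient (R : realType) (X : Type) (phi : X -> isomT R) (x : X) : bool :=
  refl (phi x).

Definition cantor_set (R : realType) (X : pseudoMetricType R) : Prop :=
  [set: X] !=set0 /\ cantor_like X.

Definition homeomorphism (X Y : topologicalType) (f : X -> Y) : Prop :=
  exists g : Y -> X, [/\ cancel f g, cancel g f, continuous f & continuous g].

Definition minimal_homeo (X : topologicalType) (a : X -> X) : Prop :=
  homeomorphism a /\
  forall C : set X, closed C -> a @` C = C -> C = set0 \/ C = [set: X].

Definition cantor_minimal_system (R : realType) (X : pseudoMetricType R)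
    (a : X -> X) : Prop :=
  cantor_set X /\ minimal_homeo a.

Definition KR_partition (X : topologicalType) (a : X -> X) (V : finType)
    (h : V -> nat) (P : V -> nat -> set X) : Prop :=
  [/\ forall v, (0 < h v)%N,
      forall v k, (1 <= k <= h v)%N -> [/\ open (P v k), closed (P v k) & P v k !=set0],
      forall v k v' k', (1 <= k <= h v)%N -> (1 <= k' <= h v')%N ->
        P v k `&` P v' k' !=set0 -> v = v' /\ k = k',
      forall x, exists v k, (1 <= k <= h v)%N /\ P v k x
    & forall v k, (1 <= k < h v)%N -> a @` P v k = P v k.+1].

Definition orient_constant (R : realType) (X : Type) (phi : X -> isomT R)
    (V : finType) (h : V -> nat) (P : V -> nat -> set X) : Prop :=
  forall v k, (1 <= k <= h v)%N -> forall x y, P v k x -> P v k y ->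
    orient phi x = orient phi y.

(* o(phi)_v computed from a point x of X(v,1): sum in Z_2 (xor) *)
Definition orient_tower (R : realType) (X : Type) (phi : X -> isomT R)
    (a : X -> X) (n : nat) (x : X) : bool :=
  \big[addb/false]_(i < n) orient phi (iter i a x).

From Pilot Require Import Defs.
From HB Require Import structures.
From mathcomp Require Import all_boot all_order all_algebra.
From mathcomp Require Import all_classical all_reals all_analysis.
From mathcomp Require Import finmap ring lra zify.
Set Implicit Arguments. Unset Strict Implicit. Unset Printing Implicit Defensive.
Import Order.TTheory GRing.Theory Num.Theory.
Import numFieldNormedType.Exports.
Local Open Scope classical_set_scope.
Local Open Scope ring_scope.

(* The homeomorphism sigma glues homeomorphisms between the nonempty clopen sets pi(U) and U,
   which exist because both are Cantor sets.  The cocycle omega is built tower by tower: at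
   the base b of a tower v of P start from a reflection whose orientation is g(b), and
   propagate by omega(alpha x) = psi(sigma x) omega(x) phi(x)^-1.  This solves the cocycle
   equation exactly except when leaving the top of the tower.  There the orientations still
   match, because g is chosen with g(alpha x) = g(x) + o(psi)(sigma x) + o(phi)(x), which is
   possible by condition (2); only a rotation theta(b) is left over.  Let M = max_v 1/h(v).
   Approximating theta within M/4 by a locally constant theta' with |theta'| <= 1/2, and
   spreading the rotation theta' evenly over the h(v) levels, makes the error at most
   1/(2 h(v)) <= M/2 inside the tower and at most M/4 + M/2 at its top. *)

(* [seq.rot] would otherwise shadow the projection of [isomT]. *)
Local Notation rot := Defs.rot.

Section CircleNorm.
Variable R : realType.
Implicit Types x y : R.

Definition tnorm x := distT x 0.

Let int_dists x := [set `|x - n%:~R| | n in [set: int]].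

Let tnormE x : tnorm x = inf (int_dists x).
Proof.
rewrite /tnorm /distT; congr inf.
by apply/seteqP; split => _ [n _ <-]; exists n; rewrite ?subr0.
Qed.

Let int_dists_neq0 x : int_dists x !=set0.
Proof. by exists `|x - 0%:~R|; exists 0. Qed.

Lemma distTE x y : distT x y = tnorm (x - y).
Proof. by rewrite /tnorm /distT subr0. Qed.

Lemma tnorm_ge0 x : 0 <= tnorm x.
Proof. by rewrite tnormE; apply: lb_le_inf => // _ [n _ <-]. Qed.

Lemma tnorm_le x (n : int) : tnorm x <= `|x - n%:~R|.
Proof. by rewrite tnormE; apply: ge_inf; [exists 0 => _ [m _ <-]|exists n]. Qed.

Lemma tnorm_le_norm x : tnorm x <= `|x|.
Proof. by have := tnorm_le x 0; rewrite subr0. Qed.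

Lemma tnorm_ltP x e : tnorm x < e -> exists n : int, `|x - n%:~R| < e.
Proof. by rewrite tnormE => /(inf_lt (int_dists_neq0 x)) [_ [n _ <-]]; exists n. Qed.

Lemma tnorm_geP x y : (forall n : int, y <= `|x - n%:~R|) -> y <= tnorm x.
Proof. by move=> le_y; rewrite tnormE; apply: lb_le_inf => // _ [n _ <-]. Qed.

Lemma tnorm_int (m : int) : tnorm m%:~R = 0.
Proof.
apply/eqP; rewrite eq_le tnorm_ge0 andbT.
by apply: le_trans (tnorm_le _ m) _; rewrite subrr normr0.
Qed.

Lemma tnormN x : tnorm (- x) = tnorm x.
Proof.
suff le_tnormN y : tnorm (- y) <= tnorm y.
  by apply/eqP; rewrite eq_le le_tnormN -{1}[x]opprK le_tnormN.
apply: tnorm_geP => n; apply: le_trans (tnorm_le _ (- n)) _.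
by rewrite rmorphN /= -opprD normrN.
Qed.

Lemma tnormD x y : tnorm (x + y) <= tnorm x + tnorm y.
Proof.
apply/ler_addgt0Pr => e e0.
have [n ltn] : exists n : int, `|x - n%:~R| < tnorm x + e / 2.
  by apply: tnorm_ltP; rewrite ltrDl divr_gt0.
have [m ltm] : exists m : int, `|y - m%:~R| < tnorm y + e / 2.
  by apply: tnorm_ltP; rewrite ltrDl divr_gt0.
apply: le_trans (tnorm_le _ (n + m)) _.
rewrite intrD opprD addrACA; apply: le_trans (ler_normD _ _) _.
have := ltrD ltn ltm; lra.
Qed.

Definition center_rep x := x - (Num.floor (x + 2^-1))%:~R.

Lemma center_rep_le_half x : `|center_rep x| <= 2^-1.
Proof.
have := floor_itv (x + 2^-1); rewrite rmorphD /= => /andP [h1 h2].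
rewrite ler_norml; apply/andP; split; rewrite /center_rep; lra.
Qed.

Lemma tnorm_sub_center_rep x : tnorm (x - center_rep x) = 0.
Proof. by rewrite /center_rep opprB addrCA subrr addr0 tnorm_int. Qed.

Lemma tnorm_le_half x : tnorm x <= 2^-1.
Proof. exact: le_trans (tnorm_le _ _) (center_rep_le_half x). Qed.

Lemma tnorm_half : tnorm 2^-1 = 2^-1.
Proof.
apply/eqP; rewrite eq_le tnorm_le_half /=; apply: tnorm_geP => n.
have [n_le0|n_gt0] := lerP n 0.
  have n_le0' : n%:~R <= 0 :> R by rewrite lerz0.
  by rewrite ger0_norm; lra.
have n_ge1 : 1 <= n%:~R :> R by rewrite ler1z.
by rewrite ler0_norm; lra.
Qed.

Definition sgn (b : bool) : R := if b then -1 else 1.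

Lemma sgnM b c : sgn b * sgn c = sgn (b (+) c).
Proof. by case: b; case: c; rewrite /sgn /= ?mulrNN ?mulr1 ?mul1r. Qed.

Lemma sgn_sq b : sgn b * sgn b = 1.
Proof. by case: b; rewrite /sgn ?mulrNN mulr1. Qed.

Lemma tnorm_sgnM b x : tnorm (sgn b * x) = tnorm x.
Proof. by case: b; rewrite /sgn ?mulN1r ?mul1r ?tnormN. Qed.

End CircleNorm.
Arguments sgn {R} b.

Section IsomGroup.
Variable R : realType.
Implicit Types g h : isomT R.

Lemma isom_appE g s : isom_app g s = rot g + sgn (refl g) * s.
Proof. by rewrite /isom_app /sgn; case: (refl g); rewrite ?mulN1r ?mul1r. Qed.

Definition isom_comp g h := IsomT (rot g + sgn (refl g) * rot h) (refl g (+) refl h).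
Definition isom_inv g := IsomT (- (sgn (refl g) * rot g)) (refl g).
Definition isom_rot (a : R) := IsomT a false.

Lemma isom_compE g h s : isom_app (isom_comp g h) s = isom_app g (isom_app h s).
Proof. rewrite !isom_appE /= -sgnM; ring. Qed.

Lemma isom_compA g h k : isom_comp g (isom_comp h k) = isom_comp (isom_comp g h) k.
Proof. rewrite /isom_comp /= addbA -sgnM; congr IsomT; ring. Qed.

Lemma isom_compVg g : isom_comp (isom_inv g) g = isom_rot 0.
Proof. by rewrite /isom_comp /isom_rot /= addbb addNr. Qed.

Lemma isom_comp0g g : isom_comp (isom_rot 0) g = g.
Proof. by case: g => a b; rewrite /isom_comp /isom_rot /sgn /=; congr IsomT; ring. Qed.

Lemma isom_compg0 g : isom_comp g (isom_rot 0) = g.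
Proof. by case: g => a b; rewrite /isom_comp /isom_rot /= addbF mulr0 addr0. Qed.

Lemma isom_comp_rot g s :
  isom_comp g (isom_rot s) = isom_comp (isom_rot (sgn (refl g) * s)) g.
Proof. by rewrite /isom_comp /isom_rot /= addbF addrC /sgn; congr IsomT; case: (refl g); ring. Qed.

Lemma isom_rot_comp a g : isom_comp (isom_rot a) g = IsomT (a + rot g) (refl g).
Proof. by rewrite /isom_comp /= mul1r. Qed.

Lemma distT_app_same_refl g h s : refl g = refl h ->
  distT (isom_app g s) (isom_app h s) = tnorm (rot g - rot h).
Proof. by move=> e; rewrite distTE !isom_appE e; congr tnorm; ring. Qed.

Lemma distT_rot_comp a b g s :
  distT (isom_app (isom_comp (isom_rot a) g) s) (isom_app (isom_comp (isom_rot b) g) s) =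
  tnorm (a - b).
Proof. by rewrite distT_app_same_refl // !isom_rot_comp /=; congr tnorm; ring. Qed.

Lemma isom_dist_same_refl g h : refl g = refl h -> isom_dist g h = tnorm (rot g - rot h).
Proof.
move=> e; rewrite /isom_dist.
suff -> : [set distT (isom_app g s) (isom_app h s) | s in [set: R]] =
          [set tnorm (rot g - rot h)] by rewrite sup1.
apply/seteqP; split => [_ [s _ <-]|_ ->]; first exact: distT_app_same_refl.
by exists 0 => //; exact: distT_app_same_refl.
Qed.

Lemma isom_dist_ge_half g h : refl g != refl h -> 2^-1 <= isom_dist g h.
Proof.
move=> e; rewrite /isom_dist.
have ub : has_ubound [set distT (isom_app g s) (isom_app h s) | s in [set: R]].
  by exists 2^-1 => _ [s _ <-]; rewrite distTE tnorm_le_half.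
have sgn_neq : sgn (refl g) - sgn (refl h) != 0.
  by move: e; rewrite /sgn; case: (refl g); case: (refl h) => //= _; lra.
(* at this [s] the two isometries are half a turn apart *)
pose s := (2^-1 - (rot g - rot h)) / (sgn (refl g) - sgn (refl h)).
suff <- : distT (isom_app g s) (isom_app h s) = 2^-1 by apply: ub_le_sup => //; exists s.
by rewrite distTE !isom_appE -(tnorm_half R); congr tnorm; rewrite /s; field; exact: sgn_neq.
Qed.

Lemma isom_dist_lt g h e : isom_dist g h < e -> e <= 2^-1 ->
  refl g = refl h /\ tnorm (rot g - rot h) < e.
Proof.
move=> lt_e le_e; have same : refl g = refl h.
  apply/eqP; apply: contraTT lt_e => /isom_dist_ge_half ge_half.
  by rewrite -leNgt (le_trans le_e).
by split => //; rewrite -isom_dist_same_refl.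
Qed.

End IsomGroup.

Section IsomContinuity.
Variables (R : realType) (X : topologicalType).
Implicit Types f g : X -> isomT R.

Definition isom_cont_at f x := forall e : R, 0 < e ->
  \forall y \near x, refl (f y) = refl (f x) /\ tnorm (rot (f y) - rot (f x)) < e.

Lemma isom_continuousP f : isom_continuous f <-> forall x, isom_cont_at f x.
Proof.
split=> [fc x e e0|fc x e e0].
  have e1 : 0 < Num.min e 2^-1 by rewrite lt_min e0 /=; lra.
  apply: filterS (fc x _ e1) => y /isom_dist_lt[|-> lt_min].
    by rewrite ge_min lexx orbT.
  by split => //; apply: lt_le_trans lt_min _; rewrite ge_min lexx.
by apply: filterS (fc x e e0) => y [same lt_e]; rewrite isom_dist_same_refl.
Qed.

Lemma isom_cont_at_comp f g x : isom_cont_at f x -> isom_cont_at g x ->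
  isom_cont_at (fun y => isom_comp (f y) (g y)) x.
Proof.
move=> fc gc e e0; have e2 : 0 < e / 2 by rewrite divr_gt0.
apply: filterS2 (fc _ e2) (gc _ e2) => y [f1 f2] [g1 g2].
rewrite /isom_comp /= f1 g1; split => //.
have -> : rot (f y) + sgn (refl (f x)) * rot (g y) - (rot (f x) + sgn (refl (f x)) * rot (g x)) =
    (rot (f y) - rot (f x)) + sgn (refl (f x)) * (rot (g y) - rot (g x)) by ring.
by apply: le_lt_trans (tnormD _ _) _; rewrite tnorm_sgnM; lra.
Qed.

Lemma isom_cont_at_inv f x : isom_cont_at f x -> isom_cont_at (fun y => isom_inv (f y)) x.
Proof.
move=> fc e e0; apply: filterS (fc e e0) => y [f1 f2].
rewrite /isom_inv /= f1; split => //.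
by rewrite -opprD -mulrN -mulrDr tnormN tnorm_sgnM.
Qed.

Lemma isom_cont_at_locally_constant f x : (\forall y \near x, f y = f x) -> isom_cont_at f x.
Proof. by move=> fx e e0; apply: filterS fx => y ->; rewrite subrr (tnorm_int R 0). Qed.

Lemma isom_cont_at_near f g x :
  (\forall y \near x, f y = g y) -> isom_cont_at g x -> isom_cont_at f x.
Proof.
move=> fg gc e e0; rewrite (nbhs_singleton fg).
by apply: filterS2 fg (gc e e0) => y ->.
Qed.

End IsomContinuity.

Lemma isom_cont_at_comp_map (R : realType) (X Y : topologicalType)
    (f : Y -> isomT R) (h : X -> Y) x :
  {for x, continuous h} -> isom_cont_at f (h x) -> isom_cont_at (f \o h) x.
Proof. by move=> hc fc e e0; exact: hc _ (fc e e0). Qed.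

(* [compact_cover] and [homeomorphism_cantor_like] are stated for pointed spaces. *)
Definition pointed_at (R : realType) (T : pseudoMetricType R) (x0 : T) : Type := T.
HB.instance Definition _ (R : realType) (T : pseudoMetricType R) (x0 : T) :=
  PseudoMetric.copy (pointed_at x0) T.
HB.instance Definition _ (R : realType) (T : pseudoMetricType R) (x0 : T) :=
  isPointed.Build (pointed_at x0) x0.

Lemma compact_cover_compact (R : realType) (T : pseudoMetricType R) (A : set T) :
  compact A -> cover_compact A.
Proof.
have [[x0 _]|T0] := pselect (exists x : T, True).
  by rewrite (@compact_cover (pointed_at x0)).
by move=> _ I D f _ _; exists fset0 => // x; case: T0; exists x.
Qed.

Lemma near_find_clopen (T : topologicalType) (I : Type) (D : I -> set T) (s : seq I) :
  (forall i, clopen (D i)) ->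
  forall x, \forall y \near x, find (fun i => `[< D i y >]) s = find (fun i => `[< D i x >]) s.
Proof.
move=> clD x; elim: s => [|i s IH] /=; first exact: nearW.
have [[oD cD] [Dx|nDx]] := (clD i, pselect (D i x)).
  have : \forall y \near x, D i y by apply: open_nbhs_nbhs.
  by apply: filterS => y Dy; rewrite !asboolT.
have : \forall y \near x, ~ D i y by apply: open_nbhs_nbhs; split => //; exact: closed_openC.
by apply: filterS2 IH => y -> nDy; rewrite !asboolF.
Qed.

Lemma locally_constant_approx (R : realType) (X : pseudoMetricType R) (th : X -> R) (d : R) :
  compact [set: X] -> hausdorff_space X -> zero_dimensional X -> 0 < d ->
  (forall x e, 0 < e -> \forall y \near x, tnorm (th y - th x) < e) ->
  exists th' : X -> R, [/\ forall x, \forall y \near x, th' y = th' x,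
     forall x, tnorm (th x - th' x) < d & forall x, `|th' x| <= 2^-1].
Proof.
move=> cX hX zX d0 thc.
have /choice [D HD] x : exists D, [/\ clopen D, D x & D `<=` [set y | tnorm (th y - th x) < d]].
  by have /(zero_dimensional_cvg hX zX cX) [D [Dx clD] DU] := thc x d d0; exists D.
have clD x : clopen (D x) by case: (HD x).
have [|x _|s _ cov] := @compact_cover_compact _ _ _ cX X [set: X] D.
- by move=> x _; case: (clD x).
- by exists x => //; case: (HD x).
have has_D y : has (fun x => `[< D x y >]) s.
  by have [x /= sx Dxy] := cov y I; apply/hasP; exists x => //; exact/asboolP.
pose c y := nth y s (find (fun x => `[< D x y >]) s).
have Dc y : D (c y) y by apply/asboolP; exact: nth_find (has_D y).
exists (fun y => center_rep (th (c y))); split.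
- move=> x; apply: filterS (near_find_clopen s clD x) => y e.
  by rewrite /c e (set_nth_default x) // -e -has_find.
- move=> x; have -> : th x - center_rep (th (c x)) =
      (th x - th (c x)) + (th (c x) - center_rep (th (c x))) by ring.
  apply: le_lt_trans (tnormD _ _) _; rewrite tnorm_sub_center_rep addr0.
  by case: (HD (c x)) => _ _; apply.
- by move=> x; exact: center_rep_le_half.
Qed.

Section SetTypeTopology.
Variables (R : realType) (X : pseudoMetricType R) (A : set X).

Lemma set_type_openP (U : set (set_type A)) :
  open U <-> exists2 V : set X, open V & set_val @^-1` V = U.
Proof. by split => -[V oV <-]; exists V. Qed.

Lemma set_type_nbhsP (a : set_type A) (U : set (set_type A)) :
  nbhs a U -> exists2 V : set X, open V /\ V (set_val a) & set_val @^-1` V `<=` U.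
Proof.
rewrite nbhsE => -[W [oW Wa] WU]; have [V oV VW] := (set_type_openP W).1 oW.
by exists V; [split => //; rewrite -VW in Wa|rewrite VW].
Qed.

Lemma set_val_continuous : continuous (set_val : set_type A -> X).
Proof. exact: initial_continuous. Qed.

Lemma set_type_hausdorff : hausdorff_space X -> hausdorff_space (set_type A).
Proof.
rewrite !open_hausdorff => hX a b ab.
have /hX [[U V] /= [aU bV] [oU oV /eqP UV]] : set_val a != set_val b.
  by apply: contra ab => /eqP /val_inj ->.
exists (set_val @^-1` U, set_val @^-1` V) => /=.
  by move: aU bV => /set_mem aU /set_mem bV; split; apply/mem_set.
split; [by exists U|by exists V|].
by apply/eqP; rewrite -subset0 => z [Uz Vz]; have : (U `&` V) (set_val z) by []; rewrite UV.
Qed.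

Lemma set_type_zero_dimensional : zero_dimensional X -> zero_dimensional (set_type A).
Proof.
move=> zX a b ab.
have /zX [U [[oU cU] Ua Ub]] : set_val a != set_val b by apply: contra ab => /eqP /val_inj ->.
exists (set_val @^-1` U); split => //; split; first by exists U.
by apply: preimage_closed => // z _; exact: set_val_continuous.
Qed.

Lemma set_type_perfect : open A -> perfect_set [set: X] -> perfect_set [set: set_type A].
Proof.
move=> oA /perfectTP pX; apply/perfectTP => a /set_type_openP [V oV Va].
apply: (pX (set_val a)).
suff -> : [set set_val a] = V `&` A by exact: openI.
apply/seteqP; split => [y ->|y [Vy Ay]].
  split; last by case: a {Va} => /= x xA; exact: set_mem.
  by have : (set_val @^-1` V) a by rewrite Va.
have Ay' : y \in A by apply/mem_set.
by have : (set_val @^-1` V) (exist _ y Ay') by []; rewrite Va => <-.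
Qed.

Lemma set_type_compact : closed A -> compact [set: X] -> compact [set: set_type A].
Proof.
move=> cA cX F PF _.
have [p [_ clp]] := cX (set_val @ F) (fmap_proper_filter _ PF) filterT.
have FA : (set_val @ F) A.
  by rewrite /= nbhs_simpl; apply: filterS filterT => -[y /= yA] _; exact: set_mem.
have Ap : A p by move: clp; rewrite clusterE => /(_ A FA); rewrite -(closure_id A).1.
exists (exist _ p (mem_set Ap)); split => // B U FB /set_type_nbhsP [V [oV Vp] VU].
have FB' : (set_val @ F) (set_val @` B).
  by rewrite /= nbhs_simpl; apply: filterS FB => b Bb; exists b.
have [_ [[b Bb <-] Vb]] := clp _ _ FB' (open_nbhs_nbhs (conj oV Vp)).
by exists b; split => //; exact: VU.
Qed.

Lemma set_type_cantor_like : cantor_like X -> clopen A -> cantor_like (set_type A).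
Proof.
move=> [pX cX hX zX] [oA clA]; split.
- exact: set_type_perfect.
- exact: set_type_compact.
- exact: set_type_hausdorff.
- exact: set_type_zero_dimensional.
Qed.

Lemma insubd_continuous_at (a0 : set_type A) x :
  open A -> A x -> {for x, continuous (insubd a0 : X -> set_type A)}.
Proof.
move=> oA Ax U /set_type_nbhsP [V [oV Vx] VU].
have insubdK' y : A y -> set_val (insubd a0 y : set_type A) = y.
  by move=> Ay; rewrite set_valE /= insubdK //; exact/mem_set.
have : nbhs x (A `&` V).
  by apply: open_nbhs_nbhs; split; [exact: openI|split; rewrite // -(insubdK' x Ax)].
by apply: filterS => y [Ay Vy]; apply: VU; rewrite /= insubdK'.
Qed.

End SetTypeTopology.

Lemma clopen_homeo_cantor_space (R : realType) (X : pseudoMetricType R) (A : set X)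
    (a : set_type A) :
  cantor_like X -> clopen A ->
  exists (e : cantor_space -> set_type A) (e' : set_type A -> cantor_space),
    [/\ cancel e e', cancel e' e, continuous e & continuous e'].
Proof.
move=> clX clA.
have [f [cf clf]] :=
  @homeomorphism_cantor_like R (pointed_at a) (set_type_cantor_like clX clA).
exists f, f^-1%FUN; split; first by move=> x; apply: funK; exact: in_setT.
- by move=> x; apply: invK; exact: in_setT.
- exact: cf.
apply/continuous_closedP => K cK.
suff -> : f^-1%FUN @^-1` K = f @` K by exact: clf.
apply/seteqP; split => [y Ky|_ [k Kk <-]]; last by rewrite /= funK //; exact: in_setT.
by exists (f^-1%FUN y) => //; apply: invK; exact: in_setT.
Qed.

Lemma clopen_homeo_pieces (R : realType) (X Y : pseudoMetricType R) (A : set X) (B : set Y) :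
  cantor_like X -> cantor_like Y -> clopen A -> clopen B -> A !=set0 -> B !=set0 ->
  exists (f : X -> Y) (g : Y -> X),
  [/\ forall x, A x -> B (f x) /\ g (f x) = x, forall y, B y -> A (g y) /\ f (g y) = y,
      forall x, A x -> {for x, continuous f} & forall y, B y -> {for y, continuous g}].
Proof.
move=> cX cY clA clB [x0 Ax0] [y0 By0].
pose a0 : set_type A := exist _ x0 (mem_set Ax0).
pose b0 : set_type B := exist _ y0 (mem_set By0).
have [eA [eA' [eAK eA'K ceA ceA']]] := clopen_homeo_cantor_space a0 cX clA.
have [eB [eB' [eBK eB'K ceB ceB']]] := clopen_homeo_cantor_space b0 cY clB.
exists (set_val \o eB \o eA' \o insubd a0), (set_val \o eA \o eB' \o insubd b0); split.
- move=> x Ax /=; split; first exact: set_mem (valP _).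
  by rewrite set_valE /= valKd eBK eA'K insubdK //; exact/mem_set.
- move=> y By /=; split; first exact: set_mem (valP _).
  by rewrite set_valE /= valKd eAK eB'K insubdK //; exact/mem_set.
- move=> x Ax; apply: continuous_comp; first by apply: insubd_continuous_at => //; case: clA.
  apply: continuous_comp; first exact: ceA'.
  by apply: continuous_comp; [exact: ceB|exact: set_val_continuous].
- move=> y By; apply: continuous_comp; first by apply: insubd_continuous_at => //; case: clB.
  apply: continuous_comp; first exact: ceB'.
  by apply: continuous_comp; [exact: ceA|exact: set_val_continuous].
Qed.

Section ClopenPartition.
Variables (T : topologicalType) (I : Type) (D : I -> Prop) (A : I -> set T).

Definition clopen_partition :=
  [/\ forall i, D i -> clopen (A i) /\ A i !=set0,
      forall i j, D i -> D j -> A i `&` A j !=set0 -> i = j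
    & forall x, exists2 i, D i & A i x].

Hypothesis partA : clopen_partition.

Let coverA : forall x, exists2 i, D i & A i x. Proof. by case: partA. Qed.

Definition part_index x : I := let: exist2 i _ _ := cid2 (coverA x) in i.

Lemma part_indexP x : D (part_index x) /\ A (part_index x) x.
Proof. by rewrite /part_index; case: cid2. Qed.

Lemma part_index_uniq i x : D i -> A i x -> part_index x = i.
Proof.
have [Dx Ax] := part_indexP x => Di Aix.
by case: partA => _ + _; apply => //; exists x.
Qed.

Lemma part_index_locally_constant x : \forall y \near x, part_index y = part_index x.
Proof.
have [Dx Ax] := part_indexP x; have [/(_ _ Dx) [[oA _] _] _ _] := partA.
by apply: filterS (open_nbhs_nbhs (conj oA Ax)) => y; exact: part_index_uniq.
Qed.

End ClopenPartition.

Lemma continuous_at_near_eq (S T : topologicalType) (f g : S -> T) x :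
  {near x, g =1 f} -> {for x, continuous g} -> {for x, continuous f}.
Proof.
by move=> gf gc; apply: cvg_trans (near_eq_cvg gf) _; rewrite -(nbhs_singleton gf).
Qed.

Lemma clopen_partition_homeo (R : realType) (X Y : pseudoMetricType R) (I : Type)
    (D : I -> Prop) (A : I -> set X) (B : I -> set Y) :
  cantor_set X -> cantor_set Y -> clopen_partition D A -> clopen_partition D B ->
  exists2 f : X -> Y, homeomorphism f & forall i, D i -> f @` A i = B i.
Proof.
move=> [[x0 _] cX] [[y0 _] cY] pA pB.
have /choice [F HF] i : exists fg : (X -> Y) * (Y -> X), D i ->
  [/\ forall x, A i x -> B i (fg.1 x) /\ fg.2 (fg.1 x) = x,
      forall y, B i y -> A i (fg.2 y) /\ fg.1 (fg.2 y) = y,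
      forall x, A i x -> {for x, continuous fg.1} &
      forall y, B i y -> {for y, continuous fg.2}].
  have [Di|nDi] := pselect (D i); last by exists (fun=> y0, fun=> x0).
  have [[/(_ i Di) [clA nA] _ _] [/(_ i Di) [clB nB] _ _]] := (pA, pB).
  have [f [g fg]] := clopen_homeo_pieces cX cY clA clB nA nB.
  by exists (f, g) => _.

pose f x := (F (part_index pA x)).1 x; pose g y := (F (part_index pB y)).2 y.
have fP x : B (part_index pA x) (f x) /\ g (f x) = x.
  have [DA AA] := part_indexP pA x; have [/(_ x AA) [Bf gf] _ _ _] := HF _ DA.
  by rewrite /g /f (part_index_uniq pB DA Bf).
have gP y : A (part_index pB y) (g y) /\ f (g y) = y.
  have [DB BB] := part_indexP pB y; have [_ /(_ y BB) [Ag fg] _ _] := HF _ DB.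
  by rewrite /g /f (part_index_uniq pA DB Ag).
exists f => [|i Di].
  exists g; split.
  - by move=> x; case: (fP x).
  - by move=> y; case: (gP y).
  - move=> x; have [DA AA] := part_indexP pA x; have [_ _ /(_ x AA) fc _] := HF _ DA.
    apply: continuous_at_near_eq fc.
    by apply: filterS (part_index_locally_constant pA x) => y e; rewrite /f e.
  - move=> y; have [DB BB] := part_indexP pB y; have [_ _ _ /(_ y BB) gc] := HF _ DB.
    apply: continuous_at_near_eq gc.
    by apply: filterS (part_index_locally_constant pB y) => z e; rewrite /g e.
apply/seteqP; split => [_ [x Ax <-]|y By].
  by rewrite -(part_index_uniq pA Di Ax); case: (fP x).
by exists (g y); [rewrite -(part_index_uniq pB Di By); case: (gP y)|case: (gP y)].
Qed.

Section KRTowers.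
Variables (X : topologicalType) (a : X -> X).
Variables (V : finType) (h : V -> nat) (P : V -> nat -> set X).
Hypothesis KRP : KR_partition a h P.

Let KR_step v k : (1 <= k < h v)%N -> a @` P v k = P v k.+1.
Proof. by case: KRP => _ _ _ _; apply. Qed.

Lemma KR_clopen_partition :
  clopen_partition (fun p : V * nat => (1 <= p.2 <= h p.1)%N) (fun p => P p.1 p.2).
Proof.
case: KRP => _ clP disjP covP _; split.
- by move=> [v k] /= /clP [oP cP nP].
- by move=> [v k] [v' k'] /= hk hk' /(disjP _ _ _ _ hk hk') [-> ->].
- by move=> x; have [v [k [hk Px]]] := covP x; exists (v, k).
Qed.

Definition tower_of x := (part_index KR_clopen_partition x).1.
Definition level_of x := (part_index KR_clopen_partition x).2.

Lemma level_ofP x : (1 <= level_of x <= h (tower_of x))%N /\ P (tower_of x) (level_of x) x.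
Proof. exact: (part_indexP KR_clopen_partition). Qed.

Lemma level_of_uniq v k x : (1 <= k <= h v)%N -> P v k x -> tower_of x = v /\ level_of x = k.
Proof. by move=> hk Px; rewrite /tower_of /level_of (part_index_uniq (i := (v, k)) _ hk Px). Qed.

Lemma level_of_locally_constant x :
  \forall y \near x, tower_of y = tower_of x /\ level_of y = level_of x.
Proof.
apply: filterS (part_index_locally_constant KR_clopen_partition x) => y e.
by rewrite /tower_of /level_of e.
Qed.

Lemma level_of_succ x : (level_of x < h (tower_of x))%N ->
  tower_of (a x) = tower_of x /\ level_of (a x) = (level_of x).+1.
Proof.
move=> lt_h; have [/andP [ge1 _] Px] := level_ofP x.
by apply: level_of_uniq; [rewrite lt_h|rewrite -KR_step ?ge1 //; exists x].
Qed.

Lemma iter_mem_level v x i : P v 1 x -> (i < h v)%N -> P v i.+1 (iter i a x).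
Proof.
move=> Px; elim: i => [//|i IH] lt_i /=.
by rewrite -KR_step; [exists (iter i a x) => //; exact/IH/ltnW|lia].
Qed.

Variable a' : X -> X.
Hypotheses (aK : cancel a a') (a'K : cancel a' a).

Lemma level_of_top x : level_of x = h (tower_of x) -> level_of (a x) = 1%N.
Proof.
move=> top; have [/andP [ge1 le_h] Pax] := level_ofP (a x).
have [gt1|] := ltnP 1 (level_of (a x)); last by lia.
have hk : (1 <= (level_of (a x)).-1 < h (tower_of (a x)))%N by lia.
move: Pax; rewrite -(prednK (ltnW gt1)) -KR_step // => -[y Py /(can_inj aK) yx]; subst y.
have [|ev ek] := level_of_uniq _ Py; first by lia.
by move: top; rewrite ev ek; lia.
Qed.

Definition tower_base x := iter (level_of x).-1 a' x.

Lemma iter_tower_base x : iter (level_of x).-1 a (tower_base x) = x.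
Proof. by rewrite /tower_base; elim: (level_of x).-1 => // n IH; rewrite iterSr /= a'K. Qed.

Lemma tower_base_succ x : (level_of x < h (tower_of x))%N -> tower_base (a x) = tower_base x.
Proof.
move=> /level_of_succ [_ e]; have [/andP [ge1 _] _] := level_ofP x.
by rewrite /tower_base e /= -(prednK ge1) iterSr aK.
Qed.

Lemma tower_base_top x : level_of x = h (tower_of x) -> tower_base (a x) = a x.
Proof. by move=> /level_of_top e; rewrite /tower_base e. Qed.

End KRTowers.

Lemma KR_partition_pullback (X : topologicalType) (a : X -> X) (V W : finType)
    (hV : V -> nat) (hW : W -> nat) (P : V -> nat -> set X)
    (piV : W -> nat -> V) (piK : W -> nat -> nat) :
  KR_partition a hV P -> (forall w, 0 < hW w)%N ->
  (forall w l, (1 <= l <= hW w)%N -> (1 <= piK w l <= hV (piV w l))%N) ->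
  (forall w l w' l', (1 <= l <= hW w)%N -> (1 <= l' <= hW w')%N ->
     piV w l = piV w' l' -> piK w l = piK w' l' -> w = w' /\ l = l') ->
  (forall v k, (1 <= k <= hV v)%N ->
     exists w l, [/\ (1 <= l <= hW w)%N, piV w l = v & piK w l = k]) ->
  (forall w l, (1 <= l <= (hW w).-1)%N ->
     P (piV w l.+1) (piK w l.+1) = a @` P (piV w l) (piK w l)) ->
  KR_partition a hW (fun w l => P (piV w l) (piK w l)).
Proof.
move=> [_ clP disjP covP _] hW_gt0 piR piI piS pi1; split => //.
- by move=> w l /piR /clP.
- move=> w l w' l' hl hl' meet.
  by have [ev ek] := disjP _ _ _ _ (piR _ _ hl) (piR _ _ hl') meet; exact: piI.
- move=> x; have [v [k [hk Px]]] := covP x; have [w [l [hl ev ek]]] := piS _ _ hk.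
  by exists w, l; rewrite ev ek.
- by move=> w l hl; rewrite pi1 //; have := hW_gt0 w; lia.
Qed.

Lemma continuous_iter (T : topologicalType) (f : T -> T) n :
  continuous f -> continuous (iter n f).
Proof.
by move=> fc; elim: n => [|n IH] x /=; [exact: cvg_id|exact: continuous_comp (IH x) (fc _)].
Qed.

Definition set_orient (R : realType) (T : Type) (f : T -> isomT R) (A : set T) : bool :=
  `[< exists x, A x /\ orient f x >].

Lemma set_orientE (R : realType) (T : Type) (f : T -> isomT R) (A : set T) x :
  (forall y z, A y -> A z -> orient f y = orient f z) -> A x -> set_orient f A = orient f x.
Proof.
move=> constA Ax; case ox: (orient f x); first by apply/asboolP; exists x.
by apply/asboolP => -[y [Ay oy]]; rewrite (constA _ _ Ax Ay) oy in ox.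
Qed.

Lemma orient_tower_levels (R : realType) (X : topologicalType) (a : X -> X)
    (f : X -> isomT R) (V : finType) (h : V -> nat) (P : V -> nat -> set X) v x :
  KR_partition a h P -> orient_constant f h P -> P v 1 x ->
  orient_tower f a (h v) x = \big[addb/false]_(i < h v) set_orient f (P v i.+1).
Proof.
move=> KRP constP Px; apply: eq_bigr => i _; apply/esym/set_orientE.
  by apply: constP; rewrite ltn_ord.
exact: (iter_mem_level KRP).
Qed.

Section Construction.
Variable R : realType.
Variables (X : pseudoMetricType R) (alpha : X -> X) (Y : pseudoMetricType R) (beta : Y -> Y).
Variables (phi : X -> isomT R) (psi : Y -> isomT R).
Variables (V : finType) (hV : V -> nat) (P : V -> nat -> set X).
Variables (W : finType) (hW : W -> nat) (Q : W -> nat -> set Y).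
Variables (piV : W -> nat -> V) (piK : W -> nat -> nat).
Hypotheses (cmsX : cantor_minimal_system alpha) (cmsY : cantor_minimal_system beta).
Hypotheses (cphi : isom_continuous phi) (cpsi : isom_continuous psi).
Hypotheses (KRP : KR_partition alpha hV P) (KRQ : KR_partition beta hW Q).
Hypotheses (ocP : orient_constant phi hV P) (ocQ : orient_constant psi hW Q).
Hypothesis piR : forall w l, (1 <= l <= hW w)%N -> (1 <= piK w l <= hV (piV w l))%N.
Hypothesis piI : forall w l w' l', (1 <= l <= hW w)%N -> (1 <= l' <= hW w')%N ->
  piV w l = piV w' l' -> piK w l = piK w' l' -> w = w' /\ l = l'.
Hypothesis piS : forall v k, (1 <= k <= hV v)%N ->
  exists w l, [/\ (1 <= l <= hW w)%N, piV w l = v & piK w l = k].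
Hypothesis pi1 : forall w l, (1 <= l <= (hW w).-1)%N ->
  P (piV w l.+1) (piK w l.+1) = alpha @` P (piV w l) (piK w l).
Hypothesis pi2 : forall v x (y : W -> Y), P v 1%N x -> (forall w, Q w 1%N (y w)) ->
  orient_tower phi alpha (hV v) x =
  \big[addb/false]_(w : W | piV w 1%N == v) orient_tower psi beta (hW w) (y w).

Let hV_gt0 v : (0 < hV v)%N. Proof. by case: KRP. Qed.
Let hW_gt0 w : (0 < hW w)%N. Proof. by case: KRQ. Qed.

Let alpha_homeo : homeomorphism alpha. Proof. by case: cmsX => _ []. Qed.
Definition alpha_inv := projT1 (cid alpha_homeo).
Let alpha_invP : [/\ cancel alpha alpha_inv, cancel alpha_inv alpha, continuous alpha
  & continuous alpha_inv].
Proof. exact: projT2 (cid alpha_homeo). Qed.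
Let alphaK : cancel alpha alpha_inv. Proof. by case: alpha_invP. Qed.
Let alpha_invK : cancel alpha_inv alpha. Proof. by case: alpha_invP. Qed.

Let KRPi : KR_partition alpha hW (fun w l => P (piV w l) (piK w l)) :=
  KR_partition_pullback KRP hW_gt0 piR piI piS pi1.

Local Notation towP := (tower_of KRP).
Local Notation levP := (level_of KRP).
Local Notation towQ := (tower_of KRPi).
Local Notation levQ := (level_of KRPi).

Lemma pi_level x : piV (towQ x) (levQ x) = towP x /\ piK (towQ x) (levQ x) = levP x.
Proof.
have [hl Px] := level_ofP KRPi x.
by have [-> ->] := level_of_uniq KRP (piR hl) Px.
Qed.

Definition oP v k := set_orient phi (P v k).
Definition oQ w l := set_orient psi (Q w l).
Definition oP_tower v := \big[addb/false]_(i < hV v) oP v i.+1.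
Definition oQ_tower w := \big[addb/false]_(i < hW w) oQ w i.+1.

Lemma oP_tower_sum v : oP_tower v = \big[addb/false]_(w | piV w 1 == v) oQ_tower w.
Proof.
have [x Px] : P v 1%N !=set0.
  by case: KRP => _ clP _ _ _; case: (clP v 1%N); rewrite ?hV_gt0.
have /choice [y Qy] w : exists y, Q w 1%N y.
  by case: KRQ => _ clQ _ _ _; case: (clQ w 1%N); rewrite ?hW_gt0.
rewrite /oP_tower -(orient_tower_levels KRP ocP Px) (pi2 Px Qy).
by apply: eq_bigr => w _; rewrite (orient_tower_levels KRQ ocQ).
Qed.

(* [orient_cobound] solves g (alpha x) = g x + o(psi)(sigma x) + o(phi)(x) in Z/2: it adds the
   orientations still ahead in the current Q-tower, those already passed in the current
   P-tower, and those of the Q-towers started so far in the current P-tower; condition (2)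
   makes the sum close up at the top of each P-tower. *)
Definition oQ_rest x := \big[addb/false]_(levQ x <= j < (hW (towQ x)).+1) oQ (towQ x) j.
Definition oP_below x := \big[addb/false]_(1 <= j < levP x) oP (towP x) j.
Definition oQ_started v k :=
  \big[addb/false]_(w | (piV w 1 == v) && (piK w 1 <= k)%N) oQ_tower w.
Definition oQ_starting v k :=
  \big[addb/false]_(w | (piV w 1 == v) && (piK w 1 == k)) oQ_tower w.
Definition oP_part x := oP_below x (+) oQ_started (towP x) (levP x).
Definition orient_cobound x := oQ_rest x (+) oP_part x.

Lemma oQ_started_succ v k : oQ_started v k.+1 = oQ_started v k (+) oQ_starting v k.+1.
Proof.
rewrite /oQ_started (bigID (fun w => piK w 1 <= k)%N) /=.
by congr addb; apply: eq_bigl => w; case: (piV w 1 == v) => //=; lia.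
Qed.

Let base_levelQ w : (1 <= 1 <= hW w)%N. Proof. by rewrite hW_gt0. Qed.

Let piK1 w : (1 <= piK w 1 <= hV (piV w 1))%N. Proof. exact: piR. Qed.

Lemma oQ_started0 v : oQ_started v 0 = false.
Proof. by apply: big_pred0 => w; have := piK1 w; case: (piV w 1 == v) => //=; lia. Qed.

Lemma oQ_started_top v : oQ_started v (hV v) = oP_tower v.
Proof.
rewrite oP_tower_sum; apply: eq_bigl => w.
by case: eqP => //= <-; have /andP [_ ->] := piK1 w.
Qed.

Lemma oQ_starting_base w : oQ_starting (piV w 1) (piK w 1) = oQ_tower w.
Proof.
apply: big_pred1 => w' /=; apply/andP/eqP => [[/eqP ev /eqP ek]|->//].
by have [->] := piI (base_levelQ w') (base_levelQ w) ev ek.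
Qed.

Lemma oQ_starting_inner w l : (1 < l <= hW w)%N -> oQ_starting (piV w l) (piK w l) = false.
Proof.
move=> hl; apply: big_pred0 => w' /=; apply/andP => -[/eqP ev /eqP ek].
have [|_ e] := piI (base_levelQ _) _ ev ek; lia.
Qed.

Lemma oQ_rest_alpha x : oQ_rest (alpha x) (+) oQ_starting (towP (alpha x)) (levP (alpha x)) =
  oQ_rest x (+) oQ (towQ x) (levQ x).
Proof.
have [[/andP [ge1 le_h] _] [ev ek]] := (level_ofP KRPi x, pi_level (alpha x)).
have [lt_h|top] := ltnP (levQ x) (hW (towQ x)).
  have [ew el] := level_of_succ lt_h.
  have rest : oQ_rest x = oQ (towQ x) (levQ x) (+) oQ_rest (alpha x).
    by rewrite /oQ_rest ew el big_ltn // ltnS ltnW.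
  rewrite -ev -ek ew el oQ_starting_inner ?ltnS ?ge1 // rest.
  by rewrite addbF addbC addbA addbb.
have top' : levQ x = hW (towQ x) by apply/eqP; rewrite eqn_leq le_h.
have el := level_of_top (KRP := KRPi) alphaK top'.
rewrite -ev -ek el oQ_starting_base /oQ_rest el big_add1 /= big_mkord addbb.
by rewrite top' big_nat1 addbb.
Qed.

Lemma oP_part_alpha x : oP_part (alpha x) =
  oP_part x (+) oP (towP x) (levP x) (+) oQ_starting (towP (alpha x)) (levP (alpha x)).
Proof.
have [/andP [ge1 le_h] _] := level_ofP KRP x.
have [lt_h|top] := ltnP (levP x) (hV (towP x)).
  have [ev ek] := level_of_succ lt_h.
  have below : oP_below (alpha x) = oP_below x (+) oP (towP x) (levP x).
    by rewrite /oP_below ev ek big_nat_recr.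
  rewrite /oP_part below ev ek oQ_started_succ.
  by move: (oP_below x) (oQ_started _ _) (oP _ _) (oQ_starting _ _); do 4!case.
have top' : levP x = hV (towP x) by apply/eqP; rewrite eqn_leq le_h.
have ek := level_of_top (KRP := KRP) alphaK top'.
have below_top : oP_below x (+) oP (towP x) (levP x) = oP_tower (towP x).
  by rewrite /oP_below -big_nat_recr //= big_add1 /= big_mkord top'.
rewrite /oP_part {1}/oP_below ek big_geq // oQ_started_succ oQ_started0.
rewrite top' oQ_started_top -top'.
by rewrite -below_top; move: (oP_below x) (oP _ _) (oQ_starting _ _); do 3!case.
Qed.

Lemma orient_cobound_alpha x : orient_cobound (alpha x) =
  orient_cobound x (+) oQ (towQ x) (levQ x) (+) oP (towP x) (levP x).
Proof.
rewrite /orient_cobound oP_part_alpha.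
have := oQ_rest_alpha x.
by move: (oQ_rest _) (oQ_rest _) (oP_part x) (oQ _ _) (oP _ _) (oQ_starting _ _); do 6!case.
Qed.

Lemma orient_cobound_locally_constant x :
  \forall y \near x, orient_cobound y = orient_cobound x.
Proof.
apply: filterS2 (level_of_locally_constant KRP x) (level_of_locally_constant KRPi x).
by move=> y [ev ek] [ew el]; rewrite /orient_cobound /oQ_rest /oP_part /oP_below ev ek ew el.
Qed.

Let sigma_spec : exists2 f : X -> Y, homeomorphism f &
  forall i, (1 <= i.2 <= hW i.1)%N -> f @` P (piV i.1 i.2) (piK i.1 i.2) = Q i.1 i.2.
Proof.
have [[cX _] [cY _]] := (cmsX, cmsY).
exact: clopen_partition_homeo cX cY (KR_clopen_partition KRPi) (KR_clopen_partition KRQ).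
Qed.

Definition sigma : X -> Y := let: exist2 f _ _ := cid2 sigma_spec in f.

Lemma sigma_homeo : homeomorphism sigma.
Proof. by rewrite /sigma; case: cid2. Qed.

Lemma sigma_image w l : (1 <= l <= hW w)%N -> sigma @` P (piV w l) (piK w l) = Q w l.
Proof. by rewrite /sigma; case: cid2 => f _ fP hl; exact: (fP (w, l)). Qed.

Lemma sigma_continuous : continuous sigma.
Proof. by have [? []] := sigma_homeo. Qed.

Lemma sigma_level x : Q (towQ x) (levQ x) (sigma x).
Proof. by have [hl Px] := level_ofP KRPi x; rewrite -sigma_image //; exists x. Qed.

Lemma orient_cobound_cocycle x :
  orient_cobound (alpha x) = orient_cobound x (+) orient psi (sigma x) (+) orient phi x.
Proof.
have [[hl _] [hk Px]] := (level_ofP KRPi x, level_ofP KRP x).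
rewrite orient_cobound_alpha /oQ /oP (set_orientE (ocQ hl) (sigma_level x)).
by rewrite (set_orientE (ocP hk) Px).
Qed.

Fixpoint orbit_isom (i : nat) (b : X) : isomT R :=
  if i is j.+1 then
    isom_comp (isom_comp (psi (sigma (iter j alpha b))) (orbit_isom j b))
              (isom_inv (phi (iter j alpha b)))
  else IsomT 0 (orient_cobound b).

Lemma orbit_isom_succ_comp i b : isom_comp (orbit_isom i.+1 b) (phi (iter i alpha b)) =
  isom_comp (psi (sigma (iter i alpha b))) (orbit_isom i b).
Proof. by rewrite /= -isom_compA isom_compVg isom_compg0. Qed.

Lemma refl_orbit_isom i b : refl (orbit_isom i b) = orient_cobound (iter i alpha b).
Proof.
elim: i => [//|i IH] /=; rewrite IH orient_cobound_cocycle /orient.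
by case: (refl (psi _)); case: (orient_cobound _); case: (refl (phi _)).
Qed.

Lemma orbit_isom_cont_at i b : isom_cont_at (orbit_isom i) b.
Proof.
have alpha_cont : continuous alpha by case: alpha_invP.
have iter_cont n : continuous (iter n alpha) := continuous_iter alpha_cont.
elim: i b => [|i IH] b /=.
  apply: isom_cont_at_locally_constant.
  by apply: filterS (orient_cobound_locally_constant b) => y ->.
have sigma_iter_cont : {for b, continuous (sigma \o iter i alpha)}.
  by apply: continuous_comp; [exact: iter_cont|exact: sigma_continuous].
apply: isom_cont_at_comp; first apply: isom_cont_at_comp => //.
  exact: isom_cont_at_comp_map sigma_iter_cont ((isom_continuousP psi).1 cpsi _).
apply: (isom_cont_at_inv (f := phi \o iter i alpha)).
exact: isom_cont_at_comp_map (iter_cont i b) ((isom_continuousP phi).1 cphi _).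
Qed.

Definition orbit_sign i b := \big[addb/false]_(j < i) refl (psi (sigma (iter j alpha b))).

Lemma orbit_sign_succ i b :
  orbit_sign i.+1 b = orbit_sign i b (+) refl (psi (sigma (iter i alpha b))).
Proof. by rewrite /orbit_sign big_ord_recr. Qed.

Lemma orbit_sign_locally_constant i b : \forall y \near b, orbit_sign i y = orbit_sign i b.
Proof.
have alpha_cont : continuous alpha by case: alpha_invP.
elim: i => [|i IH]; first by apply: nearW => y; rewrite /orbit_sign !big_ord0.
have cont : {for b, continuous (sigma \o iter i alpha)}.
  by apply: continuous_comp; [exact: continuous_iter|exact: sigma_continuous].
have /cont refl_near := (isom_continuousP psi).1 cpsi (sigma (iter i alpha b)) 1 ltr01.
by apply: filterS2 IH refl_near => y e [e' _]; rewrite !orbit_sign_succ e e'.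
Qed.

Definition mesh := \big[Num.max/0]_(v : V) ((hV v)%:R^-1 : R).

Lemma mesh_ge v : (hV v)%:R^-1 <= mesh.
Proof. exact: le_bigmax. Qed.

Lemma mesh_gt0 : 0 < mesh.
Proof.
have [[[x0 _] _] _] := cmsX; apply: lt_le_trans (mesh_ge (towP x0)).
by rewrite invr_gt0 ltr0n.
Qed.

Definition twist v b := rot (orbit_isom (hV v) b).

Lemma twist_approx v : exists th : X -> R, [/\ forall x, \forall y \near x, th y = th x,
  forall x, tnorm (twist v x - th x) < mesh / 4 & forall x, `|th x| <= 2^-1].
Proof.
have [[_ [_ cX hX zX]] _] := cmsX.
apply: locally_constant_approx => //; first by rewrite divr_gt0 ?mesh_gt0.
by move=> x e e0; apply: filterS (orbit_isom_cont_at (hV v) x e0) => y [].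
Qed.

Definition twist' v := projT1 (cid (twist_approx v)).

Lemma twist'P v : [/\ forall x, \forall y \near x, twist' v y = twist' v x,
  forall x, tnorm (twist v x - twist' v x) < mesh / 4 & forall x, `|twist' v x| <= 2^-1].
Proof. exact: projT2 (cid (twist_approx v)). Qed.

(* At level [i + 1] of tower [v] rotate by i / h(v) of the approximate twist, with the signs
   that make these rotations telescope along the tower. *)
Definition correction v i b : R :=
  - (sgn (orbit_sign i b) * sgn (orbit_sign (hV v) b) * i%:R * twist' v b / (hV v)%:R).

Local Notation base := (tower_base KRP alpha_inv).

Definition omega x := isom_comp (isom_rot (correction (towP x) (levP x).-1 (base x)))
                                (orbit_isom (levP x).-1 (base x)).

Lemma omega_continuous : isom_continuous omega.
Proof.
apply/isom_continuousP => x; set i := (levP x).-1; set v := towP x.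
have inv_cont : continuous alpha_inv by case: alpha_invP.
have base_cont : {for x, continuous (iter i alpha_inv)} by exact: continuous_iter.
apply: (@isom_cont_at_near _ _ _ (fun y =>
  isom_comp (isom_rot (correction v i (iter i alpha_inv y))) (orbit_isom i (iter i alpha_inv y)))).
  apply: filterS (level_of_locally_constant KRP x) => y [ev ek].
  by rewrite /omega /tower_base ev ek.
apply: isom_cont_at_comp; last exact: isom_cont_at_comp_map base_cont (orbit_isom_cont_at _ _).
have [twist'_near _ _] := twist'P v.
have near_base : \forall z \near iter i alpha_inv x,
    correction v i z = correction v i (iter i alpha_inv x).
  apply: filterS3 (twist'_near (iter i alpha_inv x)) (orbit_sign_locally_constant i _)
    (orbit_sign_locally_constant (hV v) _) => z e1 e2 e3.
  by rewrite /correction e1 e2 e3.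
have near_x : \forall y \near x,
    correction v i (iter i alpha_inv y) = correction v i (iter i alpha_inv x).
  exact: base_cont near_base.
by apply: isom_cont_at_locally_constant; apply: filterS near_x => y ->.
Qed.

Lemma tnorm_twist'_div v b : tnorm (twist' v b / (hV v)%:R) <= mesh / 2.
Proof.
have [_ _ le_half] := twist'P v; apply: le_trans (tnorm_le_norm _) _.
rewrite normrM normfV normr_nat [mesh / 2]mulrC.
by apply: ler_pM => //; exact: mesh_ge.
Qed.

Lemma psi_comp_omega x : isom_comp (psi (sigma x)) (omega x) =
  isom_comp (isom_rot (sgn (refl (psi (sigma x))) * correction (towP x) (levP x).-1 (base x)))
            (isom_comp (psi (sigma x)) (orbit_isom (levP x).-1 (base x))).
Proof. by rewrite /omega isom_compA isom_comp_rot -isom_compA. Qed.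

Lemma omega_comp_phi_inner x : (levP x < hV (towP x))%N ->
  isom_comp (omega (alpha x)) (phi x) =
  isom_comp (isom_rot (correction (towP x) (levP x) (base x)))
            (isom_comp (psi (sigma x)) (orbit_isom (levP x).-1 (base x))).
Proof.
move=> lt_h; have [ev ek] := level_of_succ lt_h.
have [/andP [ge1 _] _] := level_ofP KRP x.
have bx := iter_tower_base KRP alpha_invK x.
rewrite /omega ev ek /= (tower_base_succ alphaK lt_h) -isom_compA -(prednK ge1) /=.
by rewrite -[in phi x]bx orbit_isom_succ_comp bx.
Qed.

Lemma omega_comp_phi_top x : levP x = hV (towP x) ->
  isom_comp (omega (alpha x)) (phi x) =
  isom_comp (isom_rot (- twist (towP x) (base x)))
            (isom_comp (psi (sigma x)) (orbit_isom (levP x).-1 (base x))).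
Proof.
move=> top; have [/andP [ge1 _] _] := level_ofP KRP x.
have bx := iter_tower_base KRP alpha_invK x.
rewrite -[in phi x]bx -[in sigma x]bx -orbit_isom_succ_comp (prednK ge1) isom_compA.
congr isom_comp; rewrite /omega (tower_base_top alphaK top) (level_of_top alphaK top) /=.
rewrite /correction !mulr0 !mul0r oppr0 isom_comp0g isom_rot_comp /twist -top addNr.
by rewrite refl_orbit_isom -(prednK ge1) /= bx.
Qed.

Lemma cocycle_defect_inner x t : (levP x < hV (towP x))%N ->
  distT (isom_app (psi (sigma x)) (isom_app (omega x) t))
        (isom_app (omega (alpha x)) (isom_app (phi x) t)) <= mesh / 2.
Proof.
move=> lt_h; have [/andP [ge1 _] _] := level_ofP KRP x.
have bx := iter_tower_base KRP alpha_invK x.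
rewrite -!isom_compE psi_comp_omega omega_comp_phi_inner // distT_rot_comp /correction.
have es : orbit_sign (levP x) (base x) =
    orbit_sign (levP x).-1 (base x) (+) refl (psi (sigma x)).
  by rewrite -{1}(prednK ge1) orbit_sign_succ bx.
have ek : (levP x)%:R = ((levP x).-1)%:R + 1 :> R by rewrite natr1 prednK.
rewrite es ek -sgnM.
set a := sgn (refl _); set c := sgn (orbit_sign _ _); set e := sgn (orbit_sign (hV _) _).
set n := (levP x).-1%:R; set th := twist' (towP x) (base x) / (hV (towP x))%:R.
have -> : a * - (c * e * n * twist' (towP x) (base x) / (hV (towP x))%:R) -
    - (c * a * e * (n + 1) * twist' (towP x) (base x) / (hV (towP x))%:R) =
    a * (c * (e * th)).
  by rewrite /th; ring.
by rewrite !tnorm_sgnM tnorm_twist'_div.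
Qed.

Lemma cocycle_defect_top x t : levP x = hV (towP x) ->
  distT (isom_app (psi (sigma x)) (isom_app (omega x) t))
        (isom_app (omega (alpha x)) (isom_app (phi x) t)) <= 3 * mesh / 4.
Proof.
move=> top; have [/andP [ge1 _] _] := level_ofP KRP x.
have bx := iter_tower_base KRP alpha_invK x.
rewrite -!isom_compE psi_comp_omega omega_comp_phi_top // distT_rot_comp /correction.
have es : orbit_sign (hV (towP x)) (base x) =
    orbit_sign (levP x).-1 (base x) (+) refl (psi (sigma x)).
  by rewrite -top -{1}(prednK ge1) orbit_sign_succ bx.
have eh : (hV (towP x))%:R = ((levP x).-1)%:R + 1 :> R by rewrite natr1 prednK // top.
rewrite es -sgnM.
set a := sgn (refl _); set c := sgn (orbit_sign _ _); set n := (levP x).-1%:R.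
set tw := twist _ _; set th := twist' _ _.
have -> : a * - (c * (c * a) * n * th / (hV (towP x))%:R) - - tw =
    (tw - th) + th / (hV (towP x))%:R.
  rewrite (_ : a * _ = - (a * a * (c * c) * n * th / (hV (towP x))%:R)); last by ring.
  by rewrite !sgn_sq eh; field; rewrite natr1 pnatr_eq0.
apply: le_trans (tnormD _ _) _; have [_ near_tw _] := twist'P (towP x).
by have := near_tw (base x); have := tnorm_twist'_div (towP x) (base x); lra.
Qed.

Lemma cocycle_defect_sup_lt :
  sup [set r | exists x t, r = distT (isom_app (psi (sigma x)) (isom_app (omega x) t))
                                     (isom_app (omega (alpha x)) (isom_app (phi x) t))]
  < \big[Num.max/0]_(v : V) ((hV v)%:R)^-1.
Proof.
have mesh0 := mesh_gt0; apply: (@le_lt_trans _ _ (3 * mesh / 4)); last by rewrite -/mesh; lra.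
apply: ge_sup; first by have [[[x0 _] _] _] := cmsX; eexists; exists x0, 0.
move=> _ [x [t ->]]; have [/andP [_ le_h] _] := level_ofP KRP x.
have [lt_h|ge_h] := ltnP (levP x) (hV (towP x)).
  by apply: le_trans (cocycle_defect_inner t lt_h) _; lra.
by apply: cocycle_defect_top; apply/eqP; rewrite eqn_leq le_h.
Qed.

End Construction.

Theorem lemma4p8 (R : realType)
  (X : pseudoMetricType R) (alpha : X -> X)
  (Y : pseudoMetricType R) (beta : Y -> Y)
  (phi : X -> isomT R) (psi : Y -> isomT R)
  (V : finType) (hV : V -> nat) (P : V -> nat -> set X)
  (W : finType) (hW : W -> nat) (Q : W -> nat -> set Y)
  (piV : W -> nat -> V) (piK : W -> nat -> nat) :
  cantor_minimal_system alpha -> cantor_minimal_system beta ->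
  isom_continuous phi -> isom_continuous psi ->
  KR_partition alpha hV P -> KR_partition beta hW Q ->
  orient_constant phi hV P -> orient_constant psi hW Q ->
  (* pi : Q -> P, (w,l) |-> (piV w l, piK w l), is a bijection of the index sets *)
  (forall w l, (1 <= l <= hW w)%N -> (1 <= piK w l <= hV (piV w l))%N) ->
  (forall w l w' l', (1 <= l <= hW w)%N -> (1 <= l' <= hW w')%N ->
     piV w l = piV w' l' -> piK w l = piK w' l' -> w = w' /\ l = l') ->
  (forall v k, (1 <= k <= hV v)%N ->
     exists w l, [/\ (1 <= l <= hW w)%N, piV w l = v & piK w l = k]) ->
  (* (1) *)
  (forall w l, (1 <= l <= (hW w).-1)%N ->
     P (piV w l.+1) (piK w l.+1) = alpha @` P (piV w l) (piK w l)) ->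
  (* (2) *)
  (forall v x (y : W -> Y), P v 1%N x -> (forall w, Q w 1%N (y w)) ->
     orient_tower phi alpha (hV v) x =
     \big[addb/false]_(w : W | piV w 1%N == v) orient_tower psi beta (hW w) (y w)) ->
  exists (sigma : X -> Y) (omega : X -> isomT R),
    [/\ homeomorphism sigma, isom_continuous omega,
        (forall w l, (1 <= l <= hW w)%N ->
           sigma @` P (piV w l) (piK w l) = Q w l) &
        sup [set r | exists x t, r = distT
               (isom_app (psi (sigma x)) (isom_app (omega x) t))
               (isom_app (omega (alpha x)) (isom_app (phi x) t))]
        < \big[Num.max/0]_(v : V) ((hV v)%:R)^-1].
Proof.
move=> cmsX cmsY cphi cpsi KRP KRQ ocP ocQ piR piI piS pi1 pi2.
exists (sigma cmsX cmsY KRP KRQ piR piI piS pi1).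
exists (omega cmsX cmsY cphi cpsi KRP KRQ piR piI piS pi1).
split.
- exact: sigma_homeo.
- exact: omega_continuous.
- exact: sigma_image.
- by apply: cocycle_defect_sup_lt.
Qed.
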